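(* Let $X$, $Y$ be disjoint sets of cardinality at least two, and let $M\le\mathrm{Sym}(X)$ and $N\le\mathrm{Sym}(Y)$ be nontrivial permutation groups. Then $M\boxtimes N$ is subdegree-finite if and only if $M$ is subdegree-finite and all orbits of $N$ are finite.
   Context: A permutation group is subdegree-finite if every orbit of every point stabiliser is finite. Let $T$ be the $(|X|,|Y|)$-biregular tree with natural bipartition $VT=V_X\sqcup V_Y$ (vertices in $V_X$ have valency $|X|$, in $V_Y$ valency $|Y|$). $A(v)$, $\overline{A}(v)$ are the sets of arcs with origin, resp. terminus, $v$. A legal colouring is a map $c:AT\to X\cup Y$ restricting to a bijection $A(v)\to X$ for $v\in V_X$, to a bijection $A(v)\to Y$ for $v\in V_Y$, and constant on each $\overline{A}(v)$. $U_c(M,N)$ is the group of $g\in\mathrm{Aut}(T)$ with $gV_X=V_X$ and $c|_{A(gv)}\circ g|_{A(v)}\circ(c|_{A(v)})^{-1}$ in $M$ for $v\in V_X$ and in $N$ for $v\in V_Y$. The box product $M\boxtimes N\le\mathrm{Sym}(V_Y)$ is the group induced on $V_Y$ by $U_c(M,N)$. *)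

From Stdlib Require Import List.
Import ListNotations.

Definition finite_set {T : Type} (P : T -> Prop) : Prop :=
  exists l : list T, forall t, P t -> In t l.

Definition perm_group {X : Type} (M : (X -> X) -> Prop) : Prop :=
  M (fun x => x) /\
  (forall m1 m2, M m1 -> M m2 -> M (fun x => m1 (m2 x))) /\
  (forall m, M m -> exists m', M m' /\ (forall x, m' (m x) = x) /\ (forall x, m (m' x) = x)).

Definition nontrivial_group {X : Type} (M : (X -> X) -> Prop) : Prop :=
  exists m, M m /\ exists x, m x <> x.

Definition subdegree_finite {X : Type} (M : (X -> X) -> Prop) : Prop :=
  forall x y : X, finite_set (fun z => exists m, M m /\ m x = x /\ m y = z).

Definition all_orbits_finite {X : Type} (M : (X -> X) -> Prop) : Prop :=
  forall x : X, finite_set (fun z => exists m, M m /\ m x = z).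

(** Walks and reduced (non-backtracking) walks in a graph. A walk from u is a
    list [w1; ...; wk] with u ~ w1 ~ ... ~ wk; it ends at [last l u]. *)
Fixpoint is_walk {V : Type} (adj : V -> V -> Prop) (u : V) (l : list V) : Prop :=
  match l with
  | [] => True
  | w :: l' => adj u w /\ is_walk adj w l'
  end.

Fixpoint no_backtrack {V : Type} (u : V) (l : list V) : Prop :=
  match l with
  | w :: l' =>
      match l' with
      | x :: _ => u <> x /\ no_backtrack w l'
      | [] => True
      end
  | [] => True
  end.

Definition reduced_path {V : Type} (adj : V -> V -> Prop) (u : V) (l : list V) (v : V) : Prop :=
  is_walk adj u l /\ no_backtrack u l /\ last l u = v.

Definition is_tree {V : Type} (adj : V -> V -> Prop) : Prop :=
  inhabited V /\
  (forall u v, adj u v -> adj v u) /\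
  (forall u, ~ adj u u) /\
  (forall u v, exists l, reduced_path adj u l v) /\
  (forall u v l1 l2, reduced_path adj u l1 v -> reduced_path adj u l2 v -> l1 = l2).

(** A tree with its natural bipartition V = V_X ⊔ V_Y (V_X = inX, V_Y = complement). *)
Definition bipartitioned_tree {V : Type} (adj : V -> V -> Prop) (inX : V -> Prop) : Prop :=
  is_tree adj /\ (forall u v, adj u v -> (inX u <-> ~ inX v)).

(** Legal colouring c : AT -> X ⊔ Y; the arc (v,w) (origin v, terminus w) has
    colour [c v w] (values of c on non-arcs are irrelevant).  The colouring
    being a bijection A(v) -> X (resp. Y) forces the (|X|,|Y|)-biregularity. *)
Definition legal_colouring {V X Y : Type} (adj : V -> V -> Prop) (inX : V -> Prop)
    (c : V -> V -> X + Y) : Prop :=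
  (forall v, inX v ->
     (forall w, adj v w -> exists x, c v w = inl x) /\
     (forall x, exists w, adj v w /\ c v w = inl x)) /\
  (forall v, ~ inX v ->
     (forall w, adj v w -> exists y, c v w = inr y) /\
     (forall y, exists w, adj v w /\ c v w = inr y)) /\
  (forall v w w', adj v w -> adj v w' -> c v w = c v w' -> w = w') /\
  (forall u u' v, adj u v -> adj u' v -> c u v = c u' v).

(** Membership in U_c(M,N): g is an automorphism of T with g V_X = V_X whose
    local actions c|_{A(gv)} ∘ g|_{A(v)} ∘ (c|_{A(v)})^{-1} lie in M (v ∈ V_X)
    resp. N (v ∈ V_Y). *)
Definition in_U {V X Y : Type} (adj : V -> V -> Prop) (inX : V -> Prop)
    (c : V -> V -> X + Y) (M : (X -> X) -> Prop) (N : (Y -> Y) -> Prop) (g : V -> V) : Prop :=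
  (exists h : V -> V, (forall v, h (g v) = v) /\ (forall v, g (h v) = v)) /\
  (forall u v, adj u v <-> adj (g u) (g v)) /\
  (forall v, inX (g v) <-> inX v) /\
  (forall v, inX v -> exists m, M m /\
     forall w x, adj v w -> c v w = inl x -> c (g v) (g w) = inl (m x)) /\
  (forall v, ~ inX v -> exists n, N n /\
     forall w y, adj v w -> c v w = inr y -> c (g v) (g w) = inr (n y)).

(** M ⊠ N is the permutation group induced on V_Y by U_c(M,N).  It is
    subdegree-finite iff for all α, β ∈ V_Y the orbit of β under the
    stabiliser of α is finite. *)
Definition box_product_subdegree_finite {V X Y : Type} (adj : V -> V -> Prop)
    (inX : V -> Prop) (c : V -> V -> X + Y) (M : (X -> X) -> Prop) (N : (Y -> Y) -> Prop) : Prop :=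
  forall a b : V, ~ inX a -> ~ inX b ->
    finite_set (fun z => exists g, in_U adj inX c M N g /\ g a = a /\ g b = z).

From Stdlib Require Import List Classical ClassicalEpsilon.
Import ListNotations.

(* Sufficiency: let g fix the Y-vertex a and follow the geodesic from a to b.
   Across a Y-vertex the colour of the next arc ranges over an N-orbit; across
   an X-vertex whose incoming arc has already been placed it ranges over a
   suborbit of M.  Inductively the image of each arc of the geodesic ranges
   over a finite set.
   Necessity: a side-preserving colour permutation that fixes the colours of
   the arcs entering a vertex v is realised, by transporting geodesics from v,
   by an automorphism of T fixing v whose local actions are all equal to it.
   With local actions (id, n) at a Y-vertex, resp. (m, id) at an X-vertex,
   N-orbits, resp. suborbits of M, embed into suborbits of M ⊠ N. *)

Lemma finite_set_sub {T} (P Q : T -> Prop) :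
  (forall z, P z -> Q z) -> finite_set Q -> finite_set P.
Proof. intros H [l Hl]. exists l. auto. Qed.

Lemma finite_set_subsingleton {T} (P : T -> Prop) :
  (forall a b, P a -> P b -> a = b) -> finite_set P.
Proof.
  intros H. destruct (classic (exists a, P a)) as [[a Ha]|Hn].
  - exists [a]. intros t Ht. left. symmetry. apply H; auto.
  - exists []. intros t Ht. exfalso. apply Hn. eauto.
Qed.

Lemma finite_set_image {A B} (P : A -> Prop) (f : A -> B) :
  finite_set P -> finite_set (fun b => exists a, P a /\ b = f a).
Proof.
  intros [l Hl]. exists (map f l). intros b (a & Pa & ->). apply in_map. auto.
Qed.

Lemma finite_set_bind {A B} (P : A -> Prop) (Q : A -> B -> Prop) :
  finite_set P -> (forall a, P a -> finite_set (Q a)) ->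
  finite_set (fun z => exists a, P a /\ Q a z).
Proof.
  intros [l Hl] HQ.
  assert (Hlist : forall l', finite_set (fun z => exists a, In a l' /\ P a /\ Q a z)).
  { induction l' as [|a l' [k Hk]].
    - exists []. intros t (a & [] & _).
    - destruct (classic (P a)) as [Pa|nPa].
      + destruct (HQ a Pa) as [k' Hk']. exists (k' ++ k).
        intros t (a0 & [<-|Hin] & Pa0 & Qt); apply in_or_app; [left|right]; eauto.
      + exists k. intros t (a0 & [<-|Hin] & Pa0 & Qt); [contradiction|eauto]. }
  destruct (Hlist l) as [k Hk]. exists k. intros t (a & Pa & Qt). apply Hk. eauto.
Qed.

Lemma last_cons {T} (l : list T) : forall a d, last (a :: l) d = last l a.
Proof.
  induction l as [|b l IH]; intros a d; [reflexivity|].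
  change (last (b :: l) d = last (b :: l) a). rewrite !IH. reflexivity.
Qed.

Lemma is_walk_snoc {V} (adj : V -> V -> Prop) (w : V) (l : list V) : forall s,
  is_walk adj s l -> adj (last l s) w -> is_walk adj s (l ++ [w]).
Proof.
  induction l as [|z l IH]; intros s H1 H2; simpl in *.
  - split; [exact H2|exact I].
  - destruct H1 as [Ha Hb]. split; [exact Ha|]. apply IH; [exact Hb|].
    rewrite <- last_cons with (d := s). exact H2.
Qed.

Lemma is_walk_snoc_inv {V} (adj : V -> V -> Prop) (u : V) (l : list V) : forall s,
  is_walk adj s (l ++ [u]) -> is_walk adj s l.
Proof.
  induction l as [|z l IH]; intros s H; simpl in *; [exact I|].
  destruct H as [H1 H2]. split; auto.
Qed.

Lemma no_backtrack_snoc_inv {V} (u : V) (l : list V) : forall s,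
  no_backtrack s (l ++ [u]) -> no_backtrack s l.
Proof.
  induction l as [|z l IH]; intros s H; [exact I|].
  destruct l as [|x l2]; [exact I|].
  destruct H as [H1 H2]. split; [exact H1|]. apply (IH z). exact H2.
Qed.

Lemma no_backtrack_snoc {V} (w : V) (l : list V) : forall s, no_backtrack s l ->
  no_backtrack s (l ++ [w]) \/ exists l0, l = l0 ++ [last l s] /\ last l0 s = w.
Proof.
  induction l as [|z l1 IH]; intros s Hnb.
  - left. exact I.
  - destruct l1 as [|x l2].
    + destruct (classic (s = w)) as [E|E].
      * right. exists []. split; [reflexivity|exact E].
      * left. simpl. split; [exact E|exact I].
    + destruct Hnb as [Hsx Hnb].
      destruct (IH z Hnb) as [H|[l0 [E1 E2]]].
      * left. simpl. split; [exact Hsx|exact H].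
      * right. exists (z :: l0). split.
        -- rewrite (last_cons (x :: l2)). simpl. rewrite E1 at 1. reflexivity.
        -- rewrite last_cons. exact E2.
Qed.

Definition lift {X Y} (m : X -> X) (n : Y -> Y) (s : X + Y) : X + Y :=
  match s with inl x => inl (m x) | inr y => inr (n y) end.

Definition side_preserving {X Y} (phi : X + Y -> X + Y) : Prop :=
  (forall x, exists x', phi (inl x) = inl x') /\ (forall y, exists y', phi (inr y) = inr y').

Lemma lift_side_preserving {X Y} (m : X -> X) (n : Y -> Y) : side_preserving (lift m n).
Proof. split; intros; eexists; reflexivity. Qed.

Lemma lift_cancel {X Y} (m m' : X -> X) (n n' : Y -> Y) :
  (forall x, m' (m x) = x) -> (forall y, n' (n y) = y) ->
  forall s, lift m' n' (lift m n s) = s.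
Proof. intros H1 H2 [x|y]; simpl; congruence. Qed.

Section Tree.
Context {V X Y : Type} (adj : V -> V -> Prop) (inX : V -> Prop) (c : V -> V -> X + Y).
Hypothesis hT : bipartitioned_tree adj inX.
Hypothesis hc : legal_colouring adj inX c.

Lemma adj_sym u v : adj u v -> adj v u.
Proof. destruct hT as [[_ [H _]] _]. auto. Qed.

Lemma adj_X_Y u v : adj u v -> inX u -> ~ inX v.
Proof. destruct hT as [_ H]. intros A. apply (H u v A). Qed.

Lemma adj_Y_X u v : adj u v -> ~ inX u -> inX v.
Proof. destruct hT as [_ H]. intros A. specialize (H u v A). tauto. Qed.

Lemma adj_same_side u u' v v' : adj u v -> adj u' v' -> (inX u <-> inX u') -> (inX v <-> inX v').
Proof.
  destruct hT as [_ H]. intros A A'. pose proof (H u v A). pose proof (H u' v' A').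
  pose proof (classic (inX v)). pose proof (classic (inX v')). tauto.
Qed.

Lemma colour_X v w : inX v -> adj v w -> exists x, c v w = inl x.
Proof. destruct hc as (H & _). intros I. apply (proj1 (H v I)). Qed.

Lemma colour_Y v w : ~ inX v -> adj v w -> exists y, c v w = inr y.
Proof. destruct hc as (_ & H & _). intros I. apply (proj1 (H v I)). Qed.

Lemma neighbour_X v x : inX v -> exists w, adj v w /\ c v w = inl x.
Proof. destruct hc as (H & _). intros I. apply (proj2 (H v I)). Qed.

Lemma neighbour_Y v y : ~ inX v -> exists w, adj v w /\ c v w = inr y.
Proof. destruct hc as (_ & H & _). intros I. apply (proj2 (H v I)). Qed.

Lemma colour_inj v w w' : adj v w -> adj v w' -> c v w = c v w' -> w = w'.
Proof. destruct hc as (_ & _ & H & _). eauto. Qed.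

Lemma colour_in_eq u u' v : adj u v -> adj u' v -> c u v = c u' v.
Proof. destruct hc as (_ & _ & _ & H). eauto. Qed.

Lemma reduced_path_exists u v : exists l, reduced_path adj u l v.
Proof. destruct hT as [(_ & _ & _ & H & _) _]. eauto. Qed.

Lemma reduced_path_unique u v l1 l2 :
  reduced_path adj u l1 v -> reduced_path adj u l2 v -> l1 = l2.
Proof. destruct hT as [(_ & _ & _ & _ & H) _]. eauto. Qed.

Section ColourMap.
Variable v0 : V.

Definition coloured_neighbour (w : V) (col : X + Y) : V :=
  epsilon (inhabits w) (fun z => adj w z /\ c w z = col).

Definition geodesic (u : V) : list V :=
  epsilon (inhabits nil) (fun l => reduced_path adj v0 l u).

Fixpoint transport (phi : X + Y -> X + Y) (w w' : V) (l : list V) : list V :=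
  match l with
  | [] => []
  | z :: l' =>
      let z' := coloured_neighbour w' (phi (c w z)) in z' :: transport phi z z' l'
  end.

Definition colour_map phi u := last (transport phi v0 v0 (geodesic u)) v0.

Definition matches (phi : X + Y -> X + Y) w w' :=
  (inX w <-> inX w') /\ (forall a b, adj a w -> adj b w' -> c b w' = phi (c a w)).

Lemma transport_step phi w w' z : side_preserving phi -> matches phi w w' -> adj w z ->
  let z' := coloured_neighbour w' (phi (c w z)) in
  adj w' z' /\ c w' z' = phi (c w z) /\ matches phi z z'.
Proof.
  intros [sl sr] [side incol] Hwz. cbv zeta.
  assert (Hex : exists z0, adj w' z0 /\ c w' z0 = phi (c w z)).
  { destruct (classic (inX w)) as [Iw|Iw].
    - destruct (colour_X w z Iw Hwz) as [x ->]. destruct (sl x) as [x' ->].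
      apply neighbour_X. tauto.
    - destruct (colour_Y w z Iw Hwz) as [y ->]. destruct (sr y) as [y' ->].
      apply neighbour_Y. tauto. }
  destruct (epsilon_spec (inhabits w') _ Hex) as [H1 H2].
  fold (coloured_neighbour w' (phi (c w z))) in *. set (z' := coloured_neighbour w' _) in *.
  split; [exact H1|]. split; [exact H2|]. split.
  - exact (adj_same_side w w' z z' Hwz H1 side).
  - intros a b Ha Hb. rewrite (colour_in_eq b w' z' Hb H1), H2, (colour_in_eq w a z Hwz Ha).
    reflexivity.
Qed.

Lemma transport_reduced phi : side_preserving phi -> (forall s t, phi s = phi t -> s = t) ->
  forall l w w', matches phi w w' -> is_walk adj w l -> no_backtrack w l ->
  is_walk adj w' (transport phi w w' l) /\ no_backtrack w' (transport phi w w' l) /\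
  matches phi (last l w) (last (transport phi w w' l) w').
Proof.
  intros sp pinj l. induction l as [|z l1 IH]; intros w w' Hg Hw Hnb; [simpl; auto|].
  destruct Hw as [Hwz Hw1].
  destruct (transport_step phi w w' z sp Hg Hwz) as (A1 & A2 & A3).
  set (z' := coloured_neighbour w' (phi (c w z))) in *.
  assert (Hnb1 : no_backtrack z l1) by (destruct l1; [exact I|exact (proj2 Hnb)]).
  destruct (IH z z' A3 Hw1 Hnb1) as (B1 & B2 & B3).
  split; [|split].
  - simpl. fold z'. split; assumption.
  - destruct l1 as [|x l2]; [exact I|].
    simpl. fold z'. split; [|exact B2].
    destruct (transport_step phi z z' x sp A3 (proj1 Hw1)) as (_ & C2 & _).
    (* a backtrack w' = image of x would give phi (c z w) = phi (c z x), hence w = x *)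
    intros E. apply (proj1 Hnb).
    assert (E2 : c z' w' = phi (c z w)) by (apply (proj2 Hg); apply adj_sym; assumption).
    rewrite E, C2 in E2. apply pinj in E2.
    apply (colour_inj z); [apply adj_sym; exact Hwz|exact (proj1 Hw1)|symmetry; exact E2].
  - simpl transport. fold z'. rewrite (last_cons l1), (last_cons (transport phi z z' l1)).
    exact B3.
Qed.

Lemma transport_cancel phi psi : side_preserving phi -> (forall s, psi (phi s) = s) ->
  forall l w w', matches phi w w' -> is_walk adj w l ->
  transport psi w' w (transport phi w w' l) = l.
Proof.
  intros sp hinv l. induction l as [|z l1 IH]; intros w w' Hg Hw; [reflexivity|].
  destruct Hw as [Hwz Hw1].
  destruct (transport_step phi w w' z sp Hg Hwz) as (A1 & A2 & A3).
  set (z' := coloured_neighbour w' (phi (c w z))) in *.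
  simpl. fold z'.
  assert (E : coloured_neighbour w (psi (c w' z')) = z).
  { rewrite A2, hinv. unfold coloured_neighbour.
    assert (Hex : exists z0, adj w z0 /\ c w z0 = c w z) by eauto.
    destruct (epsilon_spec (inhabits w) _ Hex) as [P1 P2].
    eapply colour_inj; eauto. }
  rewrite E, IH; auto.
Qed.

Lemma transport_app phi l1 : forall l2 w w',
  transport phi w w' (l1 ++ l2) =
  transport phi w w' l1 ++ transport phi (last l1 w) (last (transport phi w w' l1) w') l2.
Proof.
  induction l1 as [|z l IH]; intros l2 w w'; [reflexivity|].
  cbn [transport app]. rewrite IH.
  rewrite (last_cons l), (last_cons (transport phi z _ l)). reflexivity.
Qed.

Lemma geodesic_spec u : reduced_path adj v0 (geodesic u) u.
Proof. unfold geodesic. apply epsilon_spec. apply reduced_path_exists. Qed.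

Lemma geodesic_unique u l : reduced_path adj v0 l u -> geodesic u = l.
Proof. intros H. eapply reduced_path_unique; [apply geodesic_spec|exact H]. Qed.

Lemma geodesic_adj u w : adj u w ->
  geodesic w = geodesic u ++ [w] \/ geodesic u = geodesic w ++ [u].
Proof.
  intros Huw. destruct (geodesic_spec u) as (H1 & H2 & H3).
  destruct (no_backtrack_snoc w (geodesic u) v0 H2) as [Hl|[l0 [E1 E2]]].
  - left. apply geodesic_unique. split; [apply is_walk_snoc; [exact H1|rewrite H3; exact Huw]|].
    split; [exact Hl|apply last_last].
  - right. rewrite H3 in E1. rewrite E1 in H1, H2 |- *.
    rewrite (geodesic_unique w l0); [reflexivity|].
    split; [eapply is_walk_snoc_inv; exact H1|].
    split; [eapply no_backtrack_snoc_inv; exact H2|exact E2].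
Qed.

Section Phi.
Variable phi : X + Y -> X + Y.
Hypothesis sp : side_preserving phi.
Hypothesis pinj : forall s t, phi s = phi t -> s = t.
Hypothesis base_matches : matches phi v0 v0.

Lemma colour_map_matches u : matches phi u (colour_map phi u) /\
  reduced_path adj v0 (transport phi v0 v0 (geodesic u)) (colour_map phi u).
Proof.
  destruct (geodesic_spec u) as (H1 & H2 & H3).
  destruct (transport_reduced phi sp pinj (geodesic u) v0 v0 base_matches H1 H2) as (B1 & B2 & B3).
  rewrite H3 in B3. split; [exact B3|]. split; [exact B1|]. split; [exact B2|reflexivity].
Qed.

Lemma colour_map_base : colour_map phi v0 = v0.
Proof.
  unfold colour_map. rewrite (geodesic_unique v0 []); [reflexivity|].
  split; [exact I|split; [exact I|reflexivity]].
Qed.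

Lemma colour_map_edge u w : adj u w ->
  adj (colour_map phi u) (colour_map phi w) /\
  c (colour_map phi u) (colour_map phi w) = phi (c u w).
Proof.
  intros Huw. destruct (geodesic_adj u w Huw) as [E|E].
  - destruct (transport_step phi u (colour_map phi u) w sp (proj1 (colour_map_matches u)) Huw)
      as (A1 & A2 & _).
    replace (colour_map phi w) with (coloured_neighbour (colour_map phi u) (phi (c u w))); [auto|].
    unfold colour_map at 2. rewrite E, transport_app. cbn [transport].
      rewrite last_last, (proj2 (proj2 (geodesic_spec u))).
    reflexivity.
  - destruct (transport_step phi w (colour_map phi w) u sp (proj1 (colour_map_matches w))
      (adj_sym _ _ Huw)) as (A1 & _).
    replace (colour_map phi u) with (coloured_neighbour (colour_map phi w) (phi (c w u))) in *.
    + split; [apply adj_sym; exact A1|].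
      apply (proj2 (proj1 (colour_map_matches w))); [exact Huw|apply adj_sym; exact A1].
    + unfold colour_map at 2. rewrite E, transport_app. cbn [transport].
      rewrite last_last, (proj2 (proj2 (geodesic_spec w))).
      reflexivity.
Qed.

Lemma colour_map_cancel psi : (forall s, psi (phi s) = s) ->
  forall u, colour_map psi (colour_map phi u) = u.
Proof.
  intros hinv u. destruct (colour_map_matches u) as [_ R]. apply geodesic_unique in R.
  unfold colour_map at 1. rewrite R, transport_cancel with (phi := phi); auto.
  - exact (proj2 (proj2 (geodesic_spec u))).
  - exact (proj1 (geodesic_spec u)).
Qed.
End Phi.

Lemma in_U_constant_local_action (M : (X -> X) -> Prop) (N : (Y -> Y) -> Prop) m n :
  perm_group M -> perm_group N -> M m -> N n ->
  (forall u, adj u v0 -> lift m n (c u v0) = c u v0) ->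
  exists g, in_U adj inX c M N g /\ g v0 = v0 /\
    forall u w, adj u w -> c (g u) (g w) = lift m n (c u w).
Proof.
  intros (_ & _ & hMinv) (_ & _ & hNinv) Mm Nn fix0.
  destruct (hMinv m Mm) as (m' & _ & m'm & mm').
  destruct (hNinv n Nn) as (n' & _ & n'n & nn').
  set (phi := lift m n). set (psi := lift m' n').
  assert (psi_phi : forall s, psi (phi s) = s) by (apply lift_cancel; assumption).
  assert (phi_psi : forall s, phi (psi s) = s) by (apply lift_cancel; assumption).
  assert (phi_inj : forall s t, phi s = phi t -> s = t) by congruence.
  assert (psi_inj : forall s t, psi s = psi t -> s = t) by congruence.
  assert (match_phi : matches phi v0 v0).
  { split; [tauto|]. intros a b Ha Hb. rewrite (colour_in_eq b a v0 Hb Ha). symmetry. auto. }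
  assert (match_psi : matches psi v0 v0).
  { split; [tauto|]. intros a b Ha Hb. rewrite (colour_in_eq b a v0 Hb Ha).
    pose proof (psi_phi (c a v0)) as E. unfold phi in E. rewrite (fix0 a Ha) in E. auto. }
  pose proof (lift_side_preserving m n) as sp_phi.
  pose proof (lift_side_preserving m' n') as sp_psi.
  pose proof (colour_map_cancel phi sp_phi phi_inj match_phi psi psi_phi) as cancel1.
  pose proof (colour_map_cancel psi sp_psi psi_inj match_psi phi phi_psi) as cancel2.
  pose proof (colour_map_edge phi sp_phi phi_inj match_phi) as edge.
  exists (colour_map phi). split; [|split; [apply colour_map_base|intros u w H; apply edge, H]].
  split; [exists (colour_map psi); auto|]. split; [|split; [|split]].
  - intros u v. split; [apply edge|].
    intros H. rewrite <- (cancel1 u), <- (cancel1 v).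
    exact (proj1 (colour_map_edge psi sp_psi psi_inj match_psi _ _ H)).
  - intros v. symmetry. exact (proj1 (proj1 (colour_map_matches phi sp_phi phi_inj match_phi v))).
  - intros v _. exists m. split; [exact Mm|]. intros w x H E. rewrite (proj2 (edge v w H)), E.
    reflexivity.
  - intros v _. exists n. split; [exact Nn|]. intros w y H E. rewrite (proj2 (edge v w H)), E.
    reflexivity.
Qed.
End ColourMap.
End Tree.

Section Sufficiency.
Context {V X Y : Type} (adj : V -> V -> Prop) (inX : V -> Prop) (c : V -> V -> X + Y).
Hypothesis hT : bipartitioned_tree adj inX.
Hypothesis hc : legal_colouring adj inX c.
Variables (M : (X -> X) -> Prop) (N : (Y -> Y) -> Prop).
Hypothesis hM : perm_group M.
Hypothesis hMf : subdegree_finite M.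
Hypothesis hNf : all_orbits_finite N.
Variable a : V.

Definition stab_orbit q := fun z => exists g, in_U adj inX c M N g /\ g a = a /\ g q = z.

Definition arc_orbit p q :=
  fun z : V * V => exists g, in_U adj inX c M N g /\ g a = a /\ z = (g p, g q).

Lemma stab_orbit_of_arc_orbit p q : finite_set (arc_orbit p q) -> finite_set (stab_orbit q).
Proof.
  intros H. apply finite_set_sub with (Q := fun z => exists pq, arc_orbit p q pq /\ z = snd pq).
  - intros z (g & HU & Ha & <-). exists (g p, g q). split; [exists g|]; auto.
  - apply finite_set_image. exact H.
Qed.

Lemma coloured_arc_subsingleton q (col : X + Y) :
  finite_set (fun z : V * V => exists w, z = (q, w) /\ adj q w /\ c q w = col).
Proof.
  apply finite_set_subsingleton. intros z1 z2 (w1 & -> & A1 & C1) (w2 & -> & A2 & C2).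
  f_equal. apply (colour_inj adj inX c hc q); congruence.
Qed.

Lemma suborbit_translate_finite x0 x0' x1 :
  finite_set (fun x => exists m, M m /\ m x0 = x0' /\ m x1 = x).
Proof.
  destruct (classic (exists m0, M m0 /\ m0 x0 = x0')) as [[m0 [M0 E0]]|Hn].
  - destruct hM as (_ & hcomp & hinv). destruct (hinv m0 M0) as (m0' & M0' & K1 & K2).
    apply finite_set_sub with
      (Q := fun x => exists z, (exists m, M m /\ m x0 = x0 /\ m x1 = z) /\ x = m0 z).
    + intros x (m & Mm & E & <-). exists (m0' (m x1)). split; [|symmetry; apply K2].
      exists (fun z => m0' (m z)). split; [apply hcomp; auto|]. split; [|reflexivity].
      rewrite E, <- E0. apply K1.
    + apply finite_set_image. apply hMf.
  - apply finite_set_subsingleton. intros x x' (m & Mm & E & _). exfalso. eauto.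
Qed.

Lemma arc_orbit_Y q r : finite_set (stab_orbit q) -> ~ inX q -> adj q r ->
  finite_set (arc_orbit q r).
Proof.
  intros Hq Iq Hqr. destruct (colour_Y adj inX c hc q r Iq Hqr) as [y Hy].
  apply finite_set_sub with (Q := fun z => exists q', stab_orbit q q' /\
     exists col, (exists n, N n /\ n y = col) /\
        (exists w, z = (q', w) /\ adj q' w /\ c q' w = inr col)).
  - intros z (g & HU & Ha & ->). exists (g q). split; [exists g; auto|].
    destruct HU as (_ & Hadj & _ & _ & HN). destruct (HN q Iq) as (n & Nn & Hn).
    exists (n y). split; [eauto|]. exists (g r). split; [reflexivity|].
    split; [apply (proj1 (Hadj q r) Hqr)|apply Hn; auto].
  - apply finite_set_bind; [exact Hq|]. intros q' _.
    apply finite_set_bind; [apply hNf|]. intros col _. apply coloured_arc_subsingleton.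
Qed.

Lemma arc_orbit_X p q r : finite_set (arc_orbit p q) -> inX q -> adj p q -> adj q r ->
  finite_set (arc_orbit q r).
Proof.
  intros Hpq Iq Hp Hqr.
  destruct (colour_X adj inX c hc q p Iq (adj_sym adj inX hT _ _ Hp)) as [x0 Hx0].
  destruct (colour_X adj inX c hc q r Iq Hqr) as [x1 Hx1].
  apply finite_set_sub with (Q := fun z => exists pq, arc_orbit p q pq /\
     exists x, (exists m, M m /\ c (snd pq) (fst pq) = inl (m x0) /\ m x1 = x) /\
        (exists w, z = (snd pq, w) /\ adj (snd pq) w /\ c (snd pq) w = inl x)).
  - intros z (g & HU & Ha & ->). exists (g p, g q). split; [exists g; auto|].
    destruct HU as (_ & Hadj & _ & HM & _). destruct (HM q Iq) as (m & Mm & Hm).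
    exists (m x1). simpl. split.
    + exists m. split; [exact Mm|]. split; [|reflexivity].
      apply Hm; [apply (adj_sym adj inX hT); exact Hp|exact Hx0].
    + exists (g r). split; [reflexivity|]. split; [apply (proj1 (Hadj q r) Hqr)|apply Hm; auto].
  - apply finite_set_bind; [exact Hpq|]. intros [p' q'] _. simpl.
    apply finite_set_bind; [|intros x _; apply coloured_arc_subsingleton].
    destruct (c q' p') as [x0'|y].
    + apply finite_set_sub with (Q := fun x => exists m, M m /\ m x0 = x0' /\ m x1 = x).
      * intros x (m & Mm & E & <-). exists m. split; [exact Mm|]. split; [congruence|reflexivity].
      * apply suborbit_translate_finite.
    + apply finite_set_subsingleton. intros x x' (m & _ & E & _). discriminate.
Qed.

Lemma arc_orbit_step p q r : adj p q -> adj q r ->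
  finite_set (arc_orbit p q) -> finite_set (arc_orbit q r).
Proof.
  intros Hpq Hqr H. destruct (classic (inX q)) as [I|I].
  - eapply arc_orbit_X; eauto.
  - apply arc_orbit_Y; [eapply stab_orbit_of_arc_orbit|..]; eauto.
Qed.

Lemma stab_orbit_walk l : forall p u, adj p u -> finite_set (arc_orbit p u) ->
  is_walk adj u l -> finite_set (stab_orbit (last l u)).
Proof.
  induction l as [|z l IH]; intros p u Hpu Hfin Hw.
  - eapply stab_orbit_of_arc_orbit; eauto.
  - destruct Hw as [Huz Hw]. rewrite last_cons. apply (IH u z Huz); auto.
    eapply arc_orbit_step; eauto.
Qed.

Lemma stab_orbit_finite b : ~ inX a -> ~ inX b -> finite_set (stab_orbit b).
Proof.
  intros Ia Ib.
  assert (Fa : finite_set (stab_orbit a)).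
  { exists [a]. intros z (g & _ & Ha & <-). left. auto. }
  destruct (reduced_path_exists adj inX hT a b) as [[|r l] (W & _ & <-)]; [exact Fa|].
  destruct W as [Aar W]. rewrite last_cons.
  apply (stab_orbit_walk l a r Aar); [apply arc_orbit_Y|]; auto.
Qed.
End Sufficiency.

Section Necessity.
Context {V X Y : Type} (adj : V -> V -> Prop) (inX : V -> Prop) (c : V -> V -> X + Y).
Hypothesis hT : bipartitioned_tree adj inX.
Hypothesis hc : legal_colouring adj inX c.
Variables (M : (X -> X) -> Prop) (N : (Y -> Y) -> Prop).
Hypothesis hM : perm_group M.
Hypothesis hN : perm_group N.
Hypothesis hX : exists x1 x2 : X, x1 <> x2.
Hypothesis hY : exists y1 y2 : Y, y1 <> y2.
Hypothesis hbox : box_product_subdegree_finite adj inX c M N.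

Lemma exists_Y_vertex : exists a, ~ inX a.
Proof.
  destruct hT as [[[v] _] _]. destruct (classic (inX v)) as [I|I]; [|eauto].
  destruct hX as [x _]. destruct (neighbour_X adj inX c hc v x I) as [w [A _]].
  exists w. exact (adj_X_Y adj inX hT v w A I).
Qed.

Lemma exists_X_vertex : exists a, inX a.
Proof.
  destruct hT as [[[v] _] _]. destruct (classic (inX v)) as [I|I]; [eauto|].
  destruct hY as [y _]. destruct (neighbour_Y adj inX c hc v y I) as [w [A _]].
  exists w. exact (adj_Y_X adj inX hT v w A I).
Qed.

(* Fix a Y-vertex a and a path a - w1 - b.  The automorphism fixing a with local
   action (id, n) sends b to a vertex whose geodesic from a starts with an arc
   of colour n y; that colour is determined by the image of b. *)
Lemma all_orbits_finite_of_box : all_orbits_finite N.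
Proof.
  intros y. destruct exists_Y_vertex as [a Ia].
  destruct (neighbour_Y adj inX c hc a y Ia) as [w1 [A1 C1]].
  pose proof (adj_Y_X adj inX hT a w1 A1 Ia) as I1.
  destruct (colour_X adj inX c hc w1 a I1 (adj_sym adj inX hT _ _ A1)) as [xa Hxa].
  assert (Hx' : exists x', x' <> xa).
  { destruct hX as (x1 & x2 & D). destruct (classic (x1 = xa)); [exists x2|exists x1]; congruence. }
  destruct Hx' as [x' Hx']. destruct (neighbour_X adj inX c hc w1 x' I1) as [b [Ab Cb]].
  assert (Dba : b <> a) by congruence.
  pose proof (adj_X_Y adj inX hT w1 b Ab I1) as Ib.
  apply finite_set_sub with (Q := fun col => exists z,
     (stab_orbit adj inX c M N a b z /\ z <> a) /\
     (exists w, adj a w /\ adj w z /\ c a w = inr col)).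
  - intros col (n & Nn & <-).
    destruct (in_U_constant_local_action adj inX c hT hc a M N (fun x => x) n hM hN
      (proj1 hM) Nn) as (g & HU & Ga & Ge).
    { intros u Au. pose proof (adj_Y_X adj inX hT a u (adj_sym adj inX hT _ _ Au) Ia) as Iu.
      destruct (colour_X adj inX c hc u a Iu Au) as [x ->]. reflexivity. }
    pose proof HU as ([h [hg _]] & Hadj & _).
    exists (g b). split; [split|].
    + exists g. auto.
    + intros E. apply Dba. rewrite <- (hg b), <- (hg a), E, Ga. reflexivity.
    + exists (g w1). rewrite <- Ga at 1 2. split; [|split].
      * exact (proj1 (Hadj a w1) A1).
      * exact (proj1 (Hadj w1 b) Ab).
      * rewrite Ge, C1 by exact A1. reflexivity.
  - apply finite_set_bind.
    + eapply finite_set_sub; [|exact (hbox a b Ia Ib)]. intros z [H _]. exact H.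
    + intros z [_ Dz]. apply finite_set_subsingleton.
      intros c1 c2 (w & P1 & P2 & P3) (w' & Q1 & Q2 & Q3).
      assert (E : [w; z] = [w'; z]).
      { apply (reduced_path_unique adj inX hT a z); repeat split; auto. }
      injection E as ->. congruence.
Qed.

(* Fix an X-vertex v with neighbours a, b of colours x0, x1.  The automorphism
   fixing v with local action (m, id) fixes a when m x0 = x0 and sends b to the
   neighbour of v of colour m x1. *)
Lemma subdegree_finite_of_box : subdegree_finite M.
Proof.
  intros x0 x1. destruct exists_X_vertex as [v Iv].
  destruct (neighbour_X adj inX c hc v x0 Iv) as [a [Aa Ca]].
  destruct (neighbour_X adj inX c hc v x1 Iv) as [b [Ab Cb]].
  pose proof (adj_X_Y adj inX hT v a Aa Iv) as Ia.
  pose proof (adj_X_Y adj inX hT v b Ab Iv) as Ib.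
  apply finite_set_sub with
    (Q := fun x => exists z, stab_orbit adj inX c M N a b z /\ c v z = inl x).
  - intros x (m & Mm & Fx & <-).
    destruct (in_U_constant_local_action adj inX c hT hc v M N m (fun y => y) hM hN
      Mm (proj1 hN)) as (g & HU & Gv & Ge).
    { intros u Au. pose proof (adj_X_Y adj inX hT v u (adj_sym adj inX hT _ _ Au) Iv) as Iu.
      destruct (colour_Y adj inX c hc u v Iu Au) as [y ->]. reflexivity. }
    pose proof HU as (_ & Hadj & _).
    assert (Ga : g a = a).
    { apply (colour_inj adj inX c hc v); auto.
      - rewrite <- Gv at 1. exact (proj1 (Hadj v a) Aa).
      - rewrite <- Gv at 1. rewrite Ge, Ca by exact Aa. simpl. congruence. }
    exists (g b). split; [exists g; auto|].
    rewrite <- Gv at 1. rewrite Ge, Cb by exact Ab. reflexivity.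
  - apply finite_set_bind; [exact (hbox a b Ia Ib)|].
    intros z _. apply finite_set_subsingleton. congruence.
Qed.
End Necessity.

Theorem proposition5p2
  (X Y : Type) (M : (X -> X) -> Prop) (N : (Y -> Y) -> Prop)
  (hX : exists x1 x2 : X, x1 <> x2) (hY : exists y1 y2 : Y, y1 <> y2)
  (hM : perm_group M) (hN : perm_group N)
  (hMnt : nontrivial_group M) (hNnt : nontrivial_group N)
  (V : Type) (adj : V -> V -> Prop) (inX : V -> Prop) (c : V -> V -> X + Y)
  (hT : bipartitioned_tree adj inX) (hc : legal_colouring adj inX c) :
  box_product_subdegree_finite adj inX c M N <->
  (subdegree_finite M /\ all_orbits_finite N).
Proof.
  split.
  - intros Hbox. split.
    + exact (subdegree_finite_of_box adj inX c hT hc M N hM hN hY Hbox).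
    + exact (all_orbits_finite_of_box adj inX c hT hc M N hM hN hX Hbox).
  - intros [HMf HNf] a b Ia Ib.
    exact (stab_orbit_finite adj inX c hT hc M N hM HMf HNf a b Ia Ib).
Qed.
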